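(* Let $r\ge 1$ be an integer and let $G$ be an $r$-regular finite simple graph of order $n$. Then $$\gamma^{0}_{st}(G)=n-2\,\gamma_{\times\lceil r/2\rceil,t}(G).$$
   Context: For a vertex $v$ of a graph $G=(V,E)$, $N(v)$ is its open neighborhood, and for $f:V\to\mathbb{R}$ and $B\subseteq V$ write $f(B)=\sum_{v\in B}f(v)$; $f(V)$ is the weight of $f$. An inverse signed total dominating function (ISTDF) of $G$ is a function $f:V\to\{-1,1\}$ such that $f(N(v))\le 0$ for every $v\in V$; $\gamma^{0}_{st}(G)$ is the maximum weight of an ISTDF of $G$. For an integer $1\le k\le \delta(G)$, a $k$-tuple total dominating set of $G$ is a set $D\subseteq V$ with $|N(v)\cap D|\ge k$ for all $v\in V$; $\gamma_{\times k,t}(G)$ is the minimum cardinality of a $k$-tuple total dominating set. *)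

From mathcomp Require Import all_boot all_order all_algebra.
Set Implicit Arguments. Unset Strict Implicit. Unset Printing Implicit Defensive.
Import Order.TTheory GRing.Theory Num.Theory.

Definition simple_graph (T : finType) (e : rel T) : Prop :=
  symmetric e /\ irreflexive e.

Definition nbhd (T : finType) (e : rel T) (v : T) : {set T} := [set u | e v u].

Definition regular (T : finType) (e : rel T) (r : nat) : Prop :=
  forall v : T, #|nbhd e v| = r.

Definition fsum (T : finType) (f : T -> int) (B : {set T}) : int :=
  (\sum_(v in B) f v)%R.

Definition ISTDF (T : finType) (e : rel T) (f : T -> int) : Prop :=
  (forall v, f v = 1%R \/ f v = (-1)%R) /\
  (forall v, (fsum f (nbhd e v) <= 0)%R).

Definition is_inv_signed_total_dom_number (T : finType) (e : rel T) (w : int) : Prop :=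
  (exists f, ISTDF e f /\ fsum f [set: T] = w) /\
  (forall f, ISTDF e f -> (fsum f [set: T] <= w)%R).

Definition ktuple_tds (T : finType) (e : rel T) (k : nat) (D : {set T}) : bool :=
  [forall v, k <= #|nbhd e v :&: D|].

(* gamma_{x k, t}(G): minimum cardinality of a k-tuple total dominating set
   (the full vertex set bounds the minimum; it is a k-tuple TDS when k <= delta). *)
Definition ktuple_tdom (T : finType) (e : rel T) (k : nat) : nat :=
  \big[minn/#|T|]_(D : {set T} | ktuple_tds e k D) #|D|.

From mathcomp Require Import all_boot all_order all_algebra.
From mathcomp Require Import zify.
Import Order.TTheory GRing.Theory Num.Theory.

Set Implicit Arguments.
Unset Strict Implicit.
Unset Printing Implicit Defensive.

(* A {-1,1}-valued f is determined by D = f^-1(-1), and f(N(v)) = |N(v)| - 2|N(v) ∩ D|.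
   In an r-regular graph, f(N(v)) <= 0 thus says |N(v) ∩ D| >= ceil(r/2), so the
   ISTDFs correspond to the ceil(r/2)-tuple total dominating sets D, with weight
   n - 2|D|: maximising the weight is minimising |D|. *)

Definition sign_of (T : finType) (D : {set T}) (v : T) : int :=
  if v \in D then (-1)%R else 1%R.

Section SignFunctions.

Variable T : finType.
Implicit Types (D B : {set T}) (f : T -> int).

Lemma fsum_sign_of D B :
  fsum (sign_of D) B = (#|B|%:Z - 2%:Z * #|B :&: D|%:Z)%R.
Proof.
rewrite /fsum (bigID (mem D)) /=.
have -> : (\sum_(v in B | v \in D) sign_of D v = \sum_(v in B :&: D) -1)%R.
  apply: eq_big => [v|v /andP[_ vD]]; first by rewrite in_setI.
  by rewrite /sign_of vD.
have -> : (\sum_(v in B | v \notin D) sign_of D v = \sum_(v in B :\: D) 1)%R.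
  apply: eq_big => [v|v /andP[_ /negbTE vD]]; first by rewrite in_setD andbC.
  by rewrite /sign_of vD.
rewrite !sumr_const -(cardsID D B) setIC mulNrn !natz PoszD; lia.
Qed.

Lemma sign_of_pm1 D v : sign_of D v = 1%R \/ sign_of D v = (-1)%R.
Proof. by rewrite /sign_of; case: (v \in D); [right | left]. Qed.

Lemma pm1_sign_of f :
  (forall v, f v = 1%R \/ f v = (-1)%R) -> f =1 sign_of [set v | f v == (-1)%R].
Proof. by move=> f_pm1 v; rewrite /sign_of inE; case: (f_pm1 v) => ->. Qed.

End SignFunctions.

Section KTupleTotalDomination.

Variables (T : finType) (e : rel T) (k : nat).

Lemma ktuple_tdom_min (D : {set T}) :
  ktuple_tds e k D -> ktuple_tdom e k <= #|D|.
Proof. by move=> tdsD; rewrite /ktuple_tdom -minEnat -leEnat bigmin_le_cond. Qed.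

Lemma ktuple_tdom_attained :
  ktuple_tds e k [set: T] ->
  exists2 D, ktuple_tds e k D & ktuple_tdom e k = #|D|.
Proof.
move=> tdsT; rewrite /ktuple_tdom -minEnat (bigmin_eq_arg _ _ _ _ tdsT).
  by case: arg_minP => // D tdsD _; exists D.
by move=> D _; apply: max_card.
Qed.

End KTupleTotalDomination.

Section RegularGraphs.

Variables (T : finType) (e : rel T) (r : nat).
Hypothesis e_regular : regular e r.

Lemma ktuple_tds_setT : ktuple_tds e (uphalf r) [set: T].
Proof.
by apply/forallP => v; rewrite setIT e_regular leq_uphalf_double -addnn leq_addr.
Qed.

Lemma sign_of_nbhd_le0 (D : {set T}) v :
  (fsum (sign_of D) (nbhd e v) <= 0)%R = (uphalf r <= #|nbhd e v :&: D|).
Proof.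
rewrite fsum_sign_of e_regular leq_uphalf_double -muln2.
by move: #|_ :&: _| => m; apply/idP/idP => ?; lia.
Qed.

Lemma ISTDF_sign_of (D : {set T}) :
  ISTDF e (sign_of D) <-> ktuple_tds e (uphalf r) D.
Proof.
split=> [[_ nbhd_le0] | /forallP tdsD].
  by apply/forallP => v; have := nbhd_le0 v; rewrite sign_of_nbhd_le0.
by split=> v; [apply: sign_of_pm1 | rewrite sign_of_nbhd_le0].
Qed.

End RegularGraphs.

Theorem mainTheorem5 (T : finType) (e : rel T) (r : nat) :
  simple_graph e -> 1 <= r -> regular e r ->
  is_inv_signed_total_dom_number e
    ((#|T|)%:Z - 2%:Z * (ktuple_tdom e (uphalf r))%:Z)%R.
Proof.
move=> _ _ e_reg.
have weight_sign_of (D : {set T}) :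
    fsum (sign_of D) [set: T] = (#|T|%:Z - 2%:Z * #|D|%:Z)%R.
  by rewrite fsum_sign_of setTI cardsT.
split.
- have [D tdsD ->] := ktuple_tdom_attained (ktuple_tds_setT e_reg).
  by exists (sign_of D); rewrite weight_sign_of; split=> //; apply/ISTDF_sign_of.
- move=> f istdf_f; have [f_pm1 _] := istdf_f.
  set D := [set v | f v == (-1)%R].
  have f_sign : fsum f =1 fsum (sign_of D).
    by move=> B; apply: eq_bigr => v _; apply: pm1_sign_of.
  have tdsD : ktuple_tds e (uphalf r) D.
    apply/(ISTDF_sign_of e_reg); split; first exact: sign_of_pm1.
    by move=> v; rewrite -f_sign; case: istdf_f.
  move: (ktuple_tdom_min tdsD); rewrite f_sign weight_sign_of; lia.
Qed.
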